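(* Let $L\in\{2,3,4\}$, $\sigma$ the ReLU, and $\mathbf A$ the matrix whose columns are all deep narrow features $f^L_{\mathbf s,\mathbf j,k}(\mathbf X)$, $(\mathbf s,\mathbf j,k)\in\mathcal M$. Then the optimal value $\|\mathbf z^*\|_1$ of the minimum-norm problem $\min_{\mathbf z,\xi}\|\mathbf z\|_1$ subject to $\mathbf A\mathbf z+\xi\mathbf 1=\mathbf y$ is at least $\max_{n\in[N-1]}|\mathrm{s}_n|$, where $\mathrm{s}_n=\frac{y_n-y_{n+1}}{x_n-x_{n+1}}$.
   Context: Data $x_1>\cdots>x_N$ real ($N\ge2$), $\mathbf X=(x_1,\dots,x_N)^T$, $\mathbf y\in\mathbb R^N$, $\xi\in\mathbb R$ free, $[n]=\{1,\dots,n\}$. Ramps: $r^+_{a}(x)=(x-a)_+$, $r^-_a(x)=(a-x)_+$. For $a_1\in[-\infty,\infty)$, $a_2\in(-\infty,\infty]$ with $a_1\le a_2$: $r^+_{a_1,a_2}(x)=0$ for $x\le a_1$, $x-a_1$ for $a_1\le x\le a_2$, $a_2-a_1$ for $x\ge a_2$; $r^-_{a_1,a_2}(x)=a_2-a_1$ for $x\le a_1$, $a_2-x$ for $a_1\le x\le a_2$, $0$ for $x\ge a_2$; if $a_1>a_2$ both are $0$. Index set $\mathcal M=\{-1,1\}^{L-1}\times[N]^{L-1}\times\mathcal M^{(3)}$ with $\mathcal M^{(3)}=\{0\}$ if $L<4$ and $\{0,1\}$ if $L=4$. For $(\mathbf s,\mathbf j,k)\in\mathcal M$ let $a_1=x_{j_1}$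 if $k=0$, $a_1=2x_{j_2}-x_{j_1}$ if $k=1$. Then $f^L_{\mathbf s,\mathbf j,k}$ is: $L=2$: $(x_{j_1}-x)_+$ if $s_1=-1$, $(x-x_{j_1})_+$ if $s_1=1$. $L=3$: if $s_2=1$: $r^-_{\min\{x_{j_1},x_{j_2}\}}$ ($s_1=-1$), $r^+_{\max\{x_{j_1},x_{j_2}\}}$ ($s_1=1$); if $s_2=-1$: $r^+_{x_{j_2},x_{j_1}}$ ($s_1=-1$), $r^-_{x_{j_1},x_{j_2}}$ ($s_1=1$). $L=4$: if $s_2=s_3=1$: $r^-_{\min\{a_1,x_{j_2},x_{j_3}\}}$ ($s_1=-1$), $r^+_{\max\{a_1,x_{j_2},x_{j_3}\}}$ ($s_1=1$); if $s_2=1,s_3=-1$: $r^+_{x_{j_3},\min\{a_1,x_{j_2}\}}$ ($s_1=-1$), $r^-_{\max\{a_1,x_{j_2}\},x_{j_3}}$ ($s_1=1$); if $s_2=-1,s_3=1$: $r^+_{\max\{x_{j_2},x_{j_3}\},a_1}$ ($s_1=-1$), $r^-_{a_1,\min\{x_{j_2},x_{j_3}\}}$ ($s_1=1$); if $s_2=s_3=-1$: $r^-_{x_{j_2},\min\{a_1,x_{j_3}\}}$ ($s_1=-1$), $r^+_{\max\{a_1,x_{j_3}\},x_{j_2}}$ ($s_1=1$). The corresponding column is $f^L_{\mathbf s,\mathbf j,k}(\mathbf X)\in\mathbb R^N$ (entrywise evaluation). *)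

From HB Require Import structures.
From mathcomp Require Import all_boot all_order all_algebra.
From mathcomp Require Import all_classical all_reals.
Set Implicit Arguments. Unset Strict Implicit. Unset Printing Implicit Defensive.
Import Order.TTheory GRing.Theory Num.Theory.
Local Open Scope ring_scope.

Section Ramps.
Variable R : realType.

Definition rp (a t : R) : R := Num.max (t - a) 0.
Definition rm (a t : R) : R := Num.max (a - t) 0.

Definition rp2 (a1 a2 t : R) : R :=
  if a2 < a1 then 0 else
  if t <= a1 then 0 else if t <= a2 then t - a1 else a2 - a1.
Definition rm2 (a1 a2 t : R) : R :=
  if a2 < a1 then 0 else
  if t <= a1 then a2 - a1 else if t <= a2 then a2 - t else 0.
End Ramps.

(* Index set M = {-1,1}^{L-1} x [N]^{L-1} x M^(3).
   Signs: true = +1, false = -1.  Position i of the tuples is s_{i+1}, j_{i+1}.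
   Data indices [N] = {1..N} are represented by 'I_N = {0..N-1}.
   M^(3) = 'I_2 = {0,1} if L = 4, and 'I_1 = {0} otherwise. *)
Definition Midx (L N : nat) : finType :=
  ((L.-1).-tuple bool * (L.-1).-tuple 'I_N * 'I_(if L == 4 then 2 else 1))%type.

Definition feat (R : realType) (L N : nat) (x : 'I_N -> R) (m : Midx L N) : R -> R :=
  let s i := nth true (tval m.1.1) i in
  let xj i := nth 0 [seq x a | a <- tval m.1.2] i in
  let a1 := if (val m.2 == 0)%N then xj 0%N else 2 * xj 1%N - xj 0%N in
  if L == 2 then
    (if s 0%N then rp (xj 0%N) else rm (xj 0%N))
  else if L == 3 then
    (if s 1%N then
       (if s 0%N then rp (Num.max (xj 0%N) (xj 1%N)) else rm (Num.min (xj 0%N) (xj 1%N)))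
     else
       (if s 0%N then rm2 (xj 0%N) (xj 1%N) else rp2 (xj 1%N) (xj 0%N)))
  else
    (match s 1%N, s 2%N with
     | true, true =>
         if s 0%N then rp (Num.max a1 (Num.max (xj 1%N) (xj 2%N)))
         else rm (Num.min a1 (Num.min (xj 1%N) (xj 2%N)))
     | true, false =>
         if s 0%N then rm2 (Num.max a1 (xj 1%N)) (xj 2%N)
         else rp2 (xj 2%N) (Num.min a1 (xj 1%N))
     | false, true =>
         if s 0%N then rm2 a1 (Num.min (xj 1%N) (xj 2%N))
         else rp2 (Num.max (xj 1%N) (xj 2%N)) a1
     | false, false =>
         if s 0%N then rp2 (Num.max a1 (xj 2%N)) (xj 1%N)
         else rm2 (xj 1%N) (Num.min a1 (xj 2%N))
     end).

(* Every feature f^L_{s,j,k} is a clamped ramp, hence 1-Lipschitz.  The constraint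
   A z + xi 1 = y gives y_n - y_{n+1} = sum_m z_m (f_m(x_n) - f_m(x_{n+1})), so
   |y_n - y_{n+1}| <= ||z||_1 |x_n - x_{n+1}|, i.e. |s_n| <= ||z||_1 for every
   feasible z, in particular for the optimal one. *)
From HB Require Import structures.
From mathcomp Require Import all_boot all_order all_algebra.
From mathcomp Require Import all_classical all_reals.
From mathcomp Require Import lra.
Import Order.TTheory GRing.Theory Num.Theory.
Local Open Scope ring_scope.

Section Nonexpansive.
Variable R : realType.

Definition nonexpansive (f : R -> R) := forall a b, `|f a - f b| <= `|a - b|.

Lemma nonexpansive_le (f : R -> R) :
  (forall a b, a <= b -> f b - f a <= b - a /\ f a - f b <= b - a) ->
  nonexpansive f.
Proof.
move=> Hf.
suff Hle a b : a <= b -> `|f a - f b| <= `|a - b|.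
  by move=> a b; case: (leP a b) => [/Hle //|/ltW/Hle]; rewrite distrC [`|b - a|]distrC.
move=> ab; have [H1 H2] := Hf a b ab.
rewrite distrC [`|a - b|]distrC [`|b - a|]ger0_norm ?subr_ge0 // ler_norml.
lra.
Qed.

Ltac ramp_cases := repeat (case: ifP => ?); lra.

Lemma nonexpansive_rp (c : R) : nonexpansive (rp c).
Proof. by apply: nonexpansive_le => a b ab; rewrite /rp /Num.max; split; ramp_cases. Qed.

Lemma nonexpansive_rm (c : R) : nonexpansive (rm c).
Proof. by apply: nonexpansive_le => a b ab; rewrite /rm /Num.max; split; ramp_cases. Qed.

Lemma nonexpansive_rp2 (c d : R) : nonexpansive (rp2 c d).
Proof. by apply: nonexpansive_le => a b ab; rewrite /rp2; split; ramp_cases. Qed.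

Lemma nonexpansive_rm2 (c d : R) : nonexpansive (rm2 c d).
Proof. by apply: nonexpansive_le => a b ab; rewrite /rm2; split; ramp_cases. Qed.

Lemma nonexpansive_feat (L N : nat) (x : 'I_N -> R) (m : Midx L N) :
  nonexpansive (feat x m).
Proof.
rewrite /feat.
repeat match goal with
 | |- context [if ?b then _ else _] => case: b
 | |- context [match ?b with true => _ | false => _ end] => case: b
 end;
  first [ exact: nonexpansive_rp | exact: nonexpansive_rm
        | exact: nonexpansive_rp2 | exact: nonexpansive_rm2 ].
Qed.

Lemma ler_dist_sum_nonexpansive (I : finType) (z : I -> R) (f : I -> R -> R) :
  (forall i, nonexpansive (f i)) -> forall a b,
  `|\sum_i z i * f i a - \sum_i z i * f i b| <= (\sum_i `|z i|) * `|a - b|.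
Proof.
move=> Hf a b; rewrite -sumrB mulr_suml.
apply: le_trans (ler_norm_sum _ _ _) _; apply: ler_sum => i _.
by rewrite -mulrBr normrM; apply: ler_wpM2l; last exact: Hf.
Qed.

End Nonexpansive.

Theorem lemma5 (R : realType) (L N : nat) (HL : (2 <= L <= 4)%N) (HN : (2 <= N)%N)
  (x y : 'I_N -> R)
  (hx : forall i j : 'I_N, (i < j)%N -> x j < x i)
  (z : Midx L N -> R) (xi : R)
  (feas : forall i : 'I_N, \sum_(m : Midx L N) z m * feat x m (x i) + xi = y i) :
  forall n n' : 'I_N, val n' = (val n).+1 ->
    `|(y n - y n') / (x n - x n')| <= \sum_(m : Midx L N) `|z m|.
Proof.
move=> n n' hn.
have x_dist_gt0 : 0 < `|x n - x n'|.
  by rewrite normr_gt0 subr_eq0 gt_eqF // hx // hn.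
have -> : y n - y n' = \sum_m z m * feat x m (x n) - \sum_m z m * feat x m (x n').
  by rewrite -!feas opprD addrACA subrr addr0.
rewrite normrM normfV ler_pdivrMr //.
exact/ler_dist_sum_nonexpansive/nonexpansive_feat.
Qed.
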